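(* For every integer $n\geqslant1$, \begin{align*} &\sum_{k=0}^{n-1}(-1)^{k}\frac{2k+1}{(n-k)(n+k+1)} \sum_{m=k}^{n-1}(-1)^{m}\frac{2m+1}{(n-m)(n+m+1)}\\ &\qquad=\frac{\pi^{2}}{12}-\frac{\gamma}{2n+1} +\frac{1}{2}[\psi(2n+1)-\psi(n+1)]^{2} -\frac{1}{2n+1}\psi(2n+1)-\frac{1}{2}\psi_{1}(2n+1). \end{align*}
   Context: $\psi=\Gamma'/\Gamma$ is the digamma function, $\psi_1=\psi'$ the trigamma function, and $\gamma$ the Euler–Mascheroni constant. *)

From Stdlib Require Import Reals.
From Coquelicot Require Import Coquelicot.
Open Scope R_scope.

Definition harmonic (n : nat) : R := sum_n_m (fun k => / INR k) 1 n.

Definition euler_gamma : R := real (Lim_seq (fun n => harmonic n - ln (INR n))).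

(* Digamma psi = Gamma'/Gamma, via its standard series (DLMF 5.7.6),
   valid for x > 0:  psi(x) = -gamma + sum_{k>=0} (1/(k+1) - 1/(k+x)). *)
Definition digamma (x : R) : R :=
  - euler_gamma + Series (fun k => / (INR k + 1) - / (INR k + x)).

(* Trigamma psi_1 = psi', via its standard series (DLMF 5.15.1):
   psi_1(x) = sum_{k>=0} 1/(k+x)^2. *)
Definition trigamma (x : R) : R := Series (fun k => / (INR k + x) ^ 2).

From Stdlib Require Import Reals Lra Lia.
From Coquelicot Require Import Coquelicot.
Open Scope R_scope.

(* Write a_k = (-1)^k (2k+1)/((n-k)(n+k+1)) = (-1)^k (1/(n-k) - 1/(n+k+1)).  The double sum
   over k <= m is half of (sum a_k)^2 + sum a_k^2.  The substitutions j = n-k and j = n+k+1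
   fold the range k < n onto 1 <= j <= 2n; this turns sum a_k into
   +-sum_(j<=2n) (-1)^j/j = +-(H_n - H_2n), and sum a_k^2 into H2_2n - 2 H_2n/(2n+1), with
   H2 the harmonic numbers of order 2.  At integers the defining series of psi and psi_1
   telescope: psi(n+1) = -gamma + H_n and psi_1(n+1) = zeta(2) - H2_n.  Finally
   zeta(2) = pi^2/6 by Matsuoka's argument: for the Wallis integrals
   W_m = int_0^(pi/2) cos^(2m) and V_m = int_0^(pi/2) x^2 cos^(2m), integration by parts gives
   1/(m+1)^2 = 2 (V_m/W_m - V_(m+1)/W_(m+1)), and V_m/W_m -> 0 since x cos x <= sin x. *)

(** * Finite sums *)

(* [sum_n_m] lives in an abstract monoid; these R-instances keep the rewritten equations at
   type [R], where [ring] and [field] apply. *)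

Lemma sum_n_m_Rplus (a b : nat -> R) m n :
  (sum_n_m (fun k => a k + b k) m n : R) = sum_n_m a m n + sum_n_m b m n.
Proof. exact (sum_n_m_plus a b m n). Qed.

Lemma sum_n_m_Rmult_l (c : R) (a : nat -> R) m n :
  (sum_n_m (fun k => c * a k) m n : R) = c * sum_n_m a m n.
Proof. exact (sum_n_m_mult_l c a m n). Qed.

Lemma sum_n_m_Rext (a b : nat -> R) m n :
  (forall k, (m <= k <= n)%nat -> a k = b k) -> (sum_n_m a m n : R) = sum_n_m b m n.
Proof. exact (sum_n_m_ext_loc a b m n). Qed.

Lemma sum_n_m_Rminus (a b : nat -> R) m n :
  (sum_n_m (fun k => a k - b k) m n : R) = sum_n_m a m n - sum_n_m b m n.
Proof.
  rewrite (sum_n_m_Rext _ (fun k => a k + -1 * b k)) by (intros; ring).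
  rewrite sum_n_m_Rplus, sum_n_m_Rmult_l; ring.
Qed.

Lemma sum_n_m_upper_triangle (a : nat -> R) m n : (m <= n)%nat ->
  2 * sum_n_m (fun k => a k * sum_n_m a k n) m n
  = sum_n_m a m n ^ 2 + sum_n_m (fun k => a k ^ 2) m n.
Proof.
  intros Hmn. remember (n - m)%nat as d eqn:Hd.
  revert m Hmn Hd; induction d as [|d IH]; intros m Hmn Hd.
  - replace n with m by lia. rewrite !sum_n_n. ring.
  - rewrite !(sum_Sn_m _ m n) by lia.
    specialize (IH (S m) ltac:(lia) ltac:(lia)).
    change (@plus R_AbelianMonoid) with Rplus. nra.
Qed.

Lemma sum_n_m_shift {G : AbelianMonoid} (f : nat -> G) m n :
  sum_n_m (fun k => f (m + k)%nat) 0 n = sum_n_m f m (m + n).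
Proof.
  revert f; induction m as [|m IH]; intros f; [reflexivity|].
  change (S m + n)%nat with (S (m + n)). rewrite <- sum_n_m_S.
  exact (IH (fun k => f (S k))).
Qed.

Lemma sum_n_m_rev {G : AbelianMonoid} (f : nat -> G) n :
  sum_n_m (fun k => f (n - k)%nat) 0 n = sum_n_m f 0 n.
Proof.
  revert f; induction n as [|n IH]; intros f; [reflexivity|].
  rewrite (sum_n_Sm _ 0 n), (sum_Sn_m f 0 (S n)) by lia.
  rewrite plus_comm, Nat.sub_diag. f_equal.
  rewrite <- sum_n_m_S, <- (IH (fun k => f (S k))).
  apply sum_n_m_ext_loc; intros k Hk; f_equal; lia.
Qed.

Lemma sum_n_m_fold_halves {G : AbelianMonoid} (f : nat -> G) n : (1 <= n)%nat ->
  sum_n_m (fun k => plus (f (n - k)%nat) (f (n + S k)%nat)) 0 (n - 1)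
  = sum_n_m f 1 (2 * n).
Proof.
  intros Hn. rewrite sum_n_m_plus, (sum_n_m_Chasles f 1 n) by lia. f_equal.
  - destruct n as [|p]; [lia|]. replace (S p - 1)%nat with p by lia.
    rewrite <- sum_n_m_S, <- (sum_n_m_rev (fun k => f (S k))).
    apply sum_n_m_ext_loc; intros k Hk. f_equal. lia.
  - rewrite (sum_n_m_ext _ (fun k => f (S n + k)%nat)) by (intros; f_equal; lia).
    rewrite sum_n_m_shift. f_equal. lia.
Qed.

(** * The coefficients and their sums *)

Lemma pow_neg1_sqr k : (-1) ^ k * (-1) ^ k = 1.
Proof. rewrite <- Rpow_mult_distr, <- pow1 with k. f_equal. ring. Qed.

Lemma pow_neg1_sub n k : (k <= n)%nat -> (-1) ^ (n - k) = (-1) ^ n * (-1) ^ k.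
Proof.
  intros Hk. replace n with (n - k + k)%nat at 2 by lia.
  rewrite pow_add, Rmult_assoc, pow_neg1_sqr. ring.
Qed.

Lemma harmonic_S n : harmonic (S n) = harmonic n + / INR (S n).
Proof. unfold harmonic. rewrite sum_n_Sm by lia. reflexivity. Qed.

Definition harmonic2 (n : nat) : R := sum_n_m (fun k => / INR k ^ 2) 1 n.

Lemma alternating_harmonic_double n :
  (sum_n_m (fun j => (-1) ^ j / INR j) 1 (2 * n) : R) = harmonic n - harmonic (2 * n).
Proof.
  induction n as [|n IH].
  - unfold harmonic. rewrite !sum_n_m_zero by lia. unfold zero; simpl. lra.
  - replace (2 * S n)%nat with (S (S (2 * n))) by lia.
    rewrite !harmonic_S, !sum_n_Sm by lia. change (@plus R_AbelianMonoid) with Rplus.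
    rewrite IH, pow_1_odd. change ((-1) ^ S (S (2 * n))) with (-1 * (-1) ^ S (2 * n)).
    rewrite pow_1_odd, !S_INR, mult_INR. simpl (INR 2).
    pose proof (pos_INR n). field. lra.
Qed.

Definition coef (n k : nat) : R :=
  (-1) ^ k * (2 * INR k + 1) / ((INR n - INR k) * (INR n + INR k + 1)).

Lemma coef_partial_fractions n k : (k < n)%nat ->
  coef n k = (-1) ^ k * (/ INR (n - k) - / INR (n + S k)).
Proof.
  intros Hk. unfold coef. rewrite minus_INR, plus_INR, S_INR by lia.
  apply lt_INR in Hk. pose proof (pos_INR k). field. lra.
Qed.

Lemma sum_coef n : (1 <= n)%nat ->
  (sum_n_m (coef n) 0 (n - 1) : R) = (-1) ^ n * (harmonic n - harmonic (2 * n)).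
Proof.
  intros Hn. rewrite <- alternating_harmonic_double, <- sum_n_m_fold_halves by exact Hn.
  rewrite <- sum_n_m_Rmult_l. apply sum_n_m_Rext. intros k Hk.
  rewrite coef_partial_fractions by lia. change (@plus R_AbelianMonoid) with Rplus.
  rewrite pow_neg1_sub by lia. replace (n + S k)%nat with (S (n + k)) by lia.
  change ((-1) ^ S (n + k)) with (-1 * (-1) ^ (n + k)). rewrite pow_add.
  unfold Rdiv. transitivity ((-1) ^ n * (-1) ^ n * ((-1) ^ k * (/ INR (n - k) - / INR (S (n + k))))).
  - rewrite pow_neg1_sqr. ring.
  - ring.
Qed.

Lemma sum_coef_sqr n : (1 <= n)%nat ->
  sum_n_m (fun k => coef n k ^ 2) 0 (n - 1)
  = harmonic2 (2 * n) - 2 / (2 * INR n + 1) * harmonic (2 * n).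
Proof.
  intros Hn. unfold harmonic2, harmonic.
  rewrite <- sum_n_m_Rmult_l, <- sum_n_m_Rminus, <- sum_n_m_fold_halves by exact Hn.
  apply sum_n_m_Rext. intros k Hk. change (@plus R_AbelianMonoid) with Rplus.
  rewrite coef_partial_fractions by lia.
  rewrite minus_INR, plus_INR, S_INR by lia.
  assert (INR k < INR n) by (apply lt_INR; lia). pose proof (pos_INR k).
  transitivity ((-1) ^ k * (-1) ^ k * (/ (INR n - INR k) - / (INR n + (INR k + 1))) ^ 2).
  - ring.
  - rewrite pow_neg1_sqr. field. lra.
Qed.

(** * Telescoping series *)

Lemma is_lim_seq_Rinv_INR : is_lim_seq (fun n => / INR n) 0.
Proof. exact (is_lim_seq_inv _ _ is_lim_seq_INR ltac:(discriminate)). Qed.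

Lemma is_series_telescoping (f : nat -> R) :
  is_lim_seq f 0 -> is_series (fun k => f k - f (S k)) (f 0%nat).
Proof.
  intros Hf.
  assert (Hsum : forall N, (sum_n (fun k => f k - f (S k)) N : R) = f 0%nat - f (S N)).
  { induction N as [|N IH].
    - apply sum_O.
    - rewrite sum_Sn, IH. change (@plus R_AbelianMonoid) with Rplus. ring. }
  enough (L : is_lim_seq (sum_n (fun k => f k - f (S k))) (f 0%nat)) by exact L.
  apply (is_lim_seq_ext (fun N => f 0%nat - f (S N))).
  { intros N. now rewrite Hsum. }
  replace (Finite (f 0%nat)) with (Finite (f 0%nat - 0)) by (f_equal; ring).
  apply is_lim_seq_minus'; [apply is_lim_seq_const|].
  now apply (is_lim_seq_incr_1 f).
Qed.

Lemma is_series_shift_difference (f : nat -> R) n : is_lim_seq f 0 ->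
  is_series (fun k => f (S k) - f (S (n + k))) (sum_n_m f 1 n).
Proof.
  intros Hf. induction n as [|n IH].
  - rewrite sum_n_m_zero by lia. apply (is_series_ext (fun _ => zero)).
    { intros k. unfold zero; simpl. lra. }
    enough (L : is_lim_seq (sum_n (fun _ => 0)) 0) by exact L.
    apply (is_lim_seq_ext (fun _ => 0)); [|apply is_lim_seq_const].
    intros N. symmetry. exact (sum_n_m_const_zero 0 N).
  - assert (Htail : is_series (fun k => f (S (n + k)) - f (S (n + S k))) (f (S n))).
    { replace (f (S n)) with (f (S (n + 0))) by (f_equal; lia).
      apply (is_series_telescoping (fun k => f (S (n + k)))).
      apply (is_lim_seq_incr_n f (S n)) in Hf. revert Hf.
      apply is_lim_seq_ext. intros k. f_equal. lia. }
    rewrite sum_n_Sm by lia.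
    pose proof (is_series_plus _ _ _ _ IH Htail) as H. revert H.
    apply is_series_ext. intros k.
    replace (S n + k)%nat with (n + S k)%nat by lia. unfold plus; simpl. lra.
Qed.

Lemma is_series_tail (a : nat -> R) (l : R) n : is_series (fun k => a (S k)) l ->
  is_series (fun k => a (S (n + k))) (l - sum_n_m a 1 n).
Proof.
  intros Ha. induction n as [|n IH].
  - rewrite sum_n_m_zero by lia. unfold zero; simpl. now rewrite Rminus_0_r.
  - rewrite sum_n_Sm by lia. change (@plus R_AbelianMonoid) with Rplus.
    apply (is_series_ext (fun k => a (S (n + S k)))); [intros k; f_equal; lia|].
    apply (is_series_incr_1 (fun k => a (S (n + k)))).
    replace (plus _ _) with (l - sum_n_m a 1 n)
      by (unfold plus; simpl; rewrite Nat.add_0_r; ring).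
    exact IH.
Qed.

(** * Wallis integrals and the Basel problem *)

Lemma ex_RInt_derivable (f : R -> R) a b : (forall x, ex_derive f x) -> ex_RInt f a b.
Proof.
  intros Hf. apply (ex_RInt_continuous (V := R_CompleteNormedModule)).
  intros x _. exact (ex_derive_continuous f x (Hf x)).
Qed.

Lemma is_RInt_antiderivative (F f : R -> R) a b :
  (forall x, is_derive F x (f x)) -> (forall x, ex_derive f x) ->
  is_RInt f a b (F b - F a).
Proof.
  intros HF Hf. apply (is_RInt_derive (V := R_CompleteNormedModule)).
  - intros x _. apply HF.
  - intros x _. exact (ex_derive_continuous f x (Hf x)).
Qed.

Lemma x_cos_le_sin x : 0 <= x <= PI / 2 -> x * cos x <= sin x.
Proof.
  intros Hx.
  assert (HI : is_RInt (fun t => t * sin t) 0 x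
                 ((sin x - x * cos x) - (sin 0 - 0 * cos 0))).
  { apply (is_RInt_antiderivative (fun t => sin t - t * cos t)).
    - intros t. auto_derive; auto. ring.
    - intros t. auto_derive; auto. }
  apply is_RInt_ge_0 in HI; [rewrite sin_0 in HI; lra | lra |].
  intros t Ht. apply Rmult_le_pos; [lra|]. apply sin_ge_0; pose proof PI_RGT_0; lra.
Qed.

Definition wallis (m : nat) : R := RInt (fun x => cos x ^ (2 * m)) 0 (PI / 2).
Definition wallis_x2 (m : nat) : R := RInt (fun x => x ^ 2 * cos x ^ (2 * m)) 0 (PI / 2).

Lemma wallis_correct m : is_RInt (fun x => cos x ^ (2 * m)) 0 (PI / 2) (wallis m).
Proof.
  apply (RInt_correct (V := R_CompleteNormedModule)).
  apply ex_RInt_derivable. intros x. auto_derive. auto.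
Qed.

Lemma wallis_x2_correct m :
  is_RInt (fun x => x ^ 2 * cos x ^ (2 * m)) 0 (PI / 2) (wallis_x2 m).
Proof.
  apply (RInt_correct (V := R_CompleteNormedModule)).
  apply ex_RInt_derivable. intros x. auto_derive. auto.
Qed.

Lemma wallis_rec m : (2 * INR m + 2) * wallis (S m) = (2 * INR m + 1) * wallis m.
Proof.
  set (h x := (2 * INR m + 2) * cos x ^ (2 * S m) - (2 * INR m + 1) * cos x ^ (2 * m)).
  set (F x := sin x * cos x ^ (2 * m + 1)).
  assert (Hparts : is_RInt h 0 (PI / 2) (F (PI / 2) - F 0)).
  { apply is_RInt_antiderivative.
    - intros x. unfold F, h. auto_derive; auto.
      replace (m + (m + 0) + 1)%nat with (S (2 * m)) by lia.
      replace (2 * S m)%nat with (S (S (2 * m))) by lia.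
      rewrite Nat.pred_succ, S_INR, mult_INR, <- !tech_pow_Rmult.
      set (K := cos x ^ (2 * m)). pose proof (sin2_cos2 x) as Hsc. unfold Rsqr in Hsc.
      assert (E : (2 * INR m + 1) * K * (sin x * sin x + cos x * cos x)
                  = (2 * INR m + 1) * K) by (rewrite Hsc; ring).
      simpl (INR 2). lra.
    - intros x. unfold h. auto_derive. auto. }
  assert (Hlin : is_RInt h 0 (PI / 2)
            ((2 * INR m + 2) * wallis (S m) - (2 * INR m + 1) * wallis m)).
  { apply (is_RInt_minus (fun x => (2 * INR m + 2) * cos x ^ (2 * S m))
                         (fun x => (2 * INR m + 1) * cos x ^ (2 * m)));
      apply (is_RInt_scal (fun x => cos x ^ (2 * _))), wallis_correct. }
  unfold F in Hparts. rewrite cos_PI2, sin_0, pow_i in Hparts by lia.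
  apply (is_RInt_unique (V := R_CompleteNormedModule)) in Hparts, Hlin. lra.
Qed.

Lemma wallis_x2_rec m :
  wallis (S m) + 2 * (INR m + 1) ^ 2 * wallis_x2 (S m)
  = (INR m + 1) * (2 * INR m + 1) * wallis_x2 m.
Proof.
  set (h x := cos x ^ (2 * S m) + 2 * (INR m + 1) ^ 2 * (x ^ 2 * cos x ^ (2 * S m))
              - (INR m + 1) * (2 * INR m + 1) * (x ^ 2 * cos x ^ (2 * m))).
  set (F x := x * cos x ^ (2 * m + 2) + (INR m + 1) * x ^ 2 * sin x * cos x ^ (2 * m + 1)).
  assert (Hparts : is_RInt h 0 (PI / 2) (F (PI / 2) - F 0)).
  { apply is_RInt_antiderivative.
    - intros x. unfold F, h. auto_derive; auto.
      replace (m + (m + 0) + 1)%nat with (S (2 * m)) by lia.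
      replace (m + (m + 0) + 2)%nat with (S (S (2 * m))) by lia.
      replace (2 * S m)%nat with (S (S (2 * m))) by lia.
      rewrite !Nat.pred_succ, !S_INR, mult_INR, <- !tech_pow_Rmult, !pow_O.
      set (K := cos x ^ (2 * m)). pose proof (sin2_cos2 x) as Hsc. unfold Rsqr in Hsc.
      assert (E : (INR m + 1) * (2 * INR m + 1) * (x * x) * K * (sin x * sin x + cos x * cos x)
                  = (INR m + 1) * (2 * INR m + 1) * (x * x) * K) by (rewrite Hsc; ring).
      simpl (INR 2). lra.
    - intros x. unfold h. auto_derive. auto. }
  assert (Hlin : is_RInt h 0 (PI / 2)
            (wallis (S m) + 2 * (INR m + 1) ^ 2 * wallis_x2 (S m)
             - (INR m + 1) * (2 * INR m + 1) * wallis_x2 m)).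
  { apply (is_RInt_minus
             (fun x => cos x ^ (2 * S m) + 2 * (INR m + 1) ^ 2 * (x ^ 2 * cos x ^ (2 * S m)))
             (fun x => (INR m + 1) * (2 * INR m + 1) * (x ^ 2 * cos x ^ (2 * m)))).
    - apply (is_RInt_plus (fun x => cos x ^ (2 * S m))
                          (fun x => 2 * (INR m + 1) ^ 2 * (x ^ 2 * cos x ^ (2 * S m)))).
      + apply wallis_correct.
      + apply (is_RInt_scal (fun x => x ^ 2 * cos x ^ (2 * S m))), wallis_x2_correct.
    - apply (is_RInt_scal (fun x => x ^ 2 * cos x ^ (2 * m))), wallis_x2_correct. }
  unfold F in Hparts. rewrite cos_PI2, sin_0, !pow_i in Hparts by lia.
  apply (is_RInt_unique (V := R_CompleteNormedModule)) in Hparts, Hlin. lra.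
Qed.

Lemma wallis_0 : wallis 0 = PI / 2.
Proof.
  unfold wallis. rewrite (RInt_ext _ (fun _ => 1)) by reflexivity.
  rewrite RInt_const. unfold scal; simpl; unfold mult; simpl. ring.
Qed.

Lemma wallis_x2_0 : wallis_x2 0 = PI ^ 3 / 24.
Proof.
  unfold wallis_x2. apply is_RInt_unique.
  apply (is_RInt_ext (fun x => x ^ 2)); [intros x _; simpl; ring|].
  replace (PI ^ 3 / 24) with ((PI / 2) ^ 3 / 3 - 0 ^ 3 / 3) by field.
  apply (is_RInt_antiderivative (fun x => x ^ 3 / 3)).
  - intros x. auto_derive; auto. field.
  - intros x. auto_derive. auto.
Qed.

Lemma wallis_pos m : 0 < wallis m.
Proof.
  induction m as [|m IH].
  - rewrite wallis_0. pose proof PI_RGT_0. lra.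
  - pose proof (wallis_rec m). pose proof (pos_INR m). nra.
Qed.

Lemma wallis_x2_nonneg m : 0 <= wallis_x2 m.
Proof.
  apply (is_RInt_ge_0 _ 0 (PI / 2) _ ltac:(pose proof PI_RGT_0; lra) (wallis_x2_correct m)).
  intros x Hx. apply Rmult_le_pos; [nra|]. apply pow_le, cos_ge_0; lra.
Qed.

Lemma wallis_x2_S_le m : wallis_x2 (S m) <= wallis m - wallis (S m).
Proof.
  apply (is_RInt_le (fun x => x ^ 2 * cos x ^ (2 * S m))
                    (fun x => cos x ^ (2 * m) - cos x ^ (2 * S m)) 0 (PI / 2));
    [pose proof PI_RGT_0; lra | apply wallis_x2_correct
    | apply (is_RInt_minus (fun x => cos x ^ (2 * m))); apply wallis_correct |].
  intros x Hx.
  replace (2 * S m)%nat with (S (S (2 * m))) by lia. rewrite <- !tech_pow_Rmult.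
  pose proof (x_cos_le_sin x ltac:(lra)). pose proof (sin2_cos2 x) as Hsc. unfold Rsqr in Hsc.
  assert (0 <= cos x) by (apply cos_ge_0; lra).
  assert (0 <= cos x ^ (2 * m)) by (apply pow_le; lra).
  assert ((x * cos x) ^ 2 <= sin x ^ 2) by (apply pow_incr; split; [nra | lra]).
  nra.
Qed.

Definition wallis_ratio (m : nat) : R := wallis_x2 m / wallis m.

Lemma inv_sqr_wallis_ratio m : / INR (S m) ^ 2 = 2 * (wallis_ratio m - wallis_ratio (S m)).
Proof.
  pose proof (wallis_rec m) as Hw. pose proof (wallis_x2_rec m) as Hv.
  pose proof (wallis_pos m). pose proof (wallis_pos (S m)). pose proof (pos_INR m).
  unfold wallis_ratio. rewrite S_INR.
  replace (wallis m) with ((2 * INR m + 2) * wallis (S m) / (2 * INR m + 1))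
    by (rewrite Hw; field; lra).
  replace (wallis_x2 m)
    with ((wallis (S m) + 2 * (INR m + 1) ^ 2 * wallis_x2 (S m)) / ((INR m + 1) * (2 * INR m + 1)))
    by (rewrite Hv; field; lra).
  field. lra.
Qed.

Lemma wallis_ratio_S_le m : wallis_ratio (S m) <= / INR (S m).
Proof.
  pose proof (wallis_rec m). pose proof (wallis_x2_S_le m).
  pose proof (wallis_pos (S m)). pose proof (pos_INR m).
  unfold wallis_ratio. rewrite S_INR.
  apply Rmult_le_reg_r with (wallis (S m) * (INR m + 1)); [nra|].
  field_simplify; [|lra|lra]. nra.
Qed.

Lemma is_lim_seq_wallis_ratio : is_lim_seq wallis_ratio 0.
Proof.
  apply is_lim_seq_incr_1.
  apply (is_lim_seq_le_le (fun _ => 0) _ (fun m => / INR (S m))).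
  - intros m. split; [|apply wallis_ratio_S_le].
    apply Rdiv_le_0_compat; [apply wallis_x2_nonneg | apply wallis_pos].
  - apply is_lim_seq_const.
  - exact (proj1 (is_lim_seq_incr_1 _ _) is_lim_seq_Rinv_INR).
Qed.

Lemma basel : is_series (fun k => / INR (S k) ^ 2) (PI ^ 2 / 6).
Proof.
  apply (is_series_ext (fun k => 2 * wallis_ratio k - 2 * wallis_ratio (S k))).
  { intros k. rewrite inv_sqr_wallis_ratio. lra. }
  replace (PI ^ 2 / 6) with (2 * wallis_ratio 0).
  2:{ unfold wallis_ratio. rewrite wallis_0, wallis_x2_0. pose proof PI_RGT_0. field. lra. }
  apply (is_series_telescoping (fun k => 2 * wallis_ratio k)).
  replace (Finite 0) with (Rbar_mult 2 0) by (simpl; f_equal; ring).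
  apply is_lim_seq_scal_l, is_lim_seq_wallis_ratio.
Qed.

(** * Digamma and trigamma at integers *)

Lemma digamma_nat n : digamma (INR n + 1) = - euler_gamma + harmonic n.
Proof.
  unfold digamma. f_equal. apply is_series_unique.
  apply (is_series_ext (fun k => / INR (S k) - / INR (S (n + k)))).
  { intros k. rewrite !S_INR, plus_INR. f_equal. f_equal. ring. }
  exact (is_series_shift_difference _ n is_lim_seq_Rinv_INR).
Qed.

Lemma trigamma_nat n : trigamma (INR n + 1) = PI ^ 2 / 6 - harmonic2 n.
Proof.
  unfold trigamma. apply is_series_unique.
  apply (is_series_ext (fun k => / INR (S (n + k)) ^ 2)).
  { intros k. rewrite S_INR, plus_INR. f_equal. f_equal. ring. }
  exact (is_series_tail (fun k => / INR k ^ 2) _ n basel).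
Qed.

Theorem mainTheorem6 (n : nat) (hn : (1 <= n)%nat) :
  sum_n_m (fun k =>
      (-1) ^ k * (2 * INR k + 1) / ((INR n - INR k) * (INR n + INR k + 1)) *
      sum_n_m (fun m =>
          (-1) ^ m * (2 * INR m + 1) / ((INR n - INR m) * (INR n + INR m + 1)))
        k (n - 1))
    0 (n - 1)
  = PI ^ 2 / 12 - euler_gamma / (2 * INR n + 1)
    + / 2 * (digamma (2 * INR n + 1) - digamma (INR n + 1)) ^ 2
    - / (2 * INR n + 1) * digamma (2 * INR n + 1)
    - / 2 * trigamma (2 * INR n + 1).
Proof.
  transitivity (sum_n_m (fun k => coef n k * sum_n_m (coef n) k (n - 1)) 0 (n - 1));
    [reflexivity|].
  pose proof (sum_n_m_upper_triangle (coef n) 0 (n - 1) ltac:(lia)) as Htriangle.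
  rewrite sum_coef, sum_coef_sqr in Htriangle by exact hn.
  replace (2 * INR n + 1) with (INR (2 * n) + 1) in * by (rewrite mult_INR; simpl; ring).
  rewrite !digamma_nat, trigamma_nat.
  replace (((-1) ^ n * (harmonic n - harmonic (2 * n))) ^ 2)
    with ((-1) ^ n * (-1) ^ n * (harmonic n - harmonic (2 * n)) ^ 2) in Htriangle by ring.
  rewrite pow_neg1_sqr in Htriangle.
  apply (Rmult_eq_reg_l 2); [|lra]. rewrite Htriangle.
  pose proof (pos_INR (2 * n)). field. lra.
Qed.
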